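(* Let $G$ be a finite simple graph on $[d]$. Then: (a) for $I\in\{\langle [I_G]_2\rangle, J_G, L_G\}$, $I$ is a prime ideal if and only if $I=I_G$; (b) $I_G=\langle [I_G]_2\rangle$ if and only if $I_G$ is generated by quadratic binomials; (c) $\langle [I_G]_2\rangle=J_G$ if and only if the complement graph $\overline{G}$ has no $3$-cycle; (d) $J_G=L_G$ if and only if $G$ is a complete multipartite graph on a vertex partition $V_1\sqcup\cdots\sqcup V_t$ with $|V_j|\le 3$ for every $j$.
   Context: A stable set of $G$ is a subset of $[d]$ with no edge of $G$ (including $\emptyset$ and singletons); $S(G)$ is the set of stable sets; $R[G]=\mathbb{K}[x_S : S\in S(G)]$ over a field $\mathbb{K}$, all variables of degree $1$. $I_G$ is the kernel of $\pi:R[G]\to\mathbb{K}[t_1,\dots,t_d,s]$, $\pi(x_S)=s\prod_{j\in S}t_j$ (a binomial $\prod x_{S_i}-\prod x_{T_i}$ of equal degree lies in $I_G$ iff the multiset unions of the $S_i$ and of the $T_i$ coincide). $\langle [I_G]_2\rangle$ is the ideal generated by the degree-$2$ homogeneous elements of $I_G$. $J_G$ is the ideal generated by all $x_{S_1}x_{S_2}-x_{S_3}x_{S_4}$ with $S_i\in S(G)$, $S_1\cap S_2=S_3\cap S_4=\emptyset$, $S_1\cup S_2=S_3\cup S_4$. $L_G=\langle x_{S\setminus\{i\}}x_{\{i\}}-x_Sx_\emptyset : i\in S\in S(G),\ |S|\ge2\rangle$. By convention, ''$I_G$ is generated by quadratic binomials'' includes the case $I_G=\{0\}$. A complete multipartite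 graph on $V_1\sqcup\dots\sqcup V_t$ has an edge between two vertices iff they lie in different parts. *)

From HB Require Import structures.
From mathcomp Require Import all_boot all_algebra.
From mathcomp Require Import mpoly.
Set Implicit Arguments. Unset Strict Implicit. Unset Printing Implicit Defensive.
Import GRing.Theory.
Local Open Scope ring_scope.

Section Defs.
Variables (K : fieldType) (d : nat) (G : rel 'I_d).

Definition simple_graph := ssrbool.symmetric G /\ irreflexive G.

Definition stable (S : {set 'I_d}) : bool :=
  [forall i, forall j, (i \in S) && (j \in S) ==> ~~ G i j].

Definition stype := {S : {set 'I_d} | stable S}.

Definition nvar := #|{: stype}|.

(* R[G] = K[x_S : S in S(G)], variables indexed via enum_rank *)
Definition RG := {mpoly K[nvar]}.

Definition xvar (S : stype) : RG := 'X_(enum_rank S).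

(* x_A for an arbitrary subset A; equal to the variable x_A when A is stable
   (only ever used for stable A) *)
Definition xset (A : {set 'I_d}) : RG :=
  if @insub _ stable stype A is Some T then xvar T else 0.

(* target ring K[t_1..t_d, s] : t_j = 'X_(widen j), s = 'X_(ord_max) *)
Definition Tring := {mpoly K[d.+1]}.
Definition tvar (j : 'I_d) : Tring := 'X_(widen_ord (leqnSn d) j).
Definition svar : Tring := 'X_(@ord_max d).

Definition pi_img (k : 'I_nvar) : Tring :=
  svar * \prod_(j in val (enum_val k)) tvar j.

Definition pi (p : RG) : Tring := p \mPo [tuple pi_img k | k < nvar].

Definition I_G : RG -> Prop := fun p => pi p = 0.

Definition ideal_gen (A : RG -> Prop) : RG -> Prop := fun p =>
  exists s : seq (RG * RG),
    (forall c, c \in s -> A c.2) /\ p = \sum_(c <- s) c.1 * c.2.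

Definition ideal_eq (I J : RG -> Prop) := forall p, I p <-> J p.

Definition prime_ideal (I : RG -> Prop) :=
  ~ I 1 /\ forall a b, I (a * b) -> I a \/ I b.

Definition I_G2 : RG -> Prop :=
  ideal_gen (fun p => I_G p /\ p \is 2.-homog).

Definition J_gens : RG -> Prop := fun p =>
  exists S1 S2 S3 S4 : {set 'I_d},
    [/\ stable S1, stable S2, stable S3 & stable S4] /\
    [/\ S1 :&: S2 = set0, S3 :&: S4 = set0, S1 :|: S2 = S3 :|: S4 &
        p = xset S1 * xset S2 - xset S3 * xset S4].
Definition J_G := ideal_gen J_gens.

Definition L_gens : RG -> Prop := fun p =>
  exists (S : {set 'I_d}) (i : 'I_d),
    [/\ stable S, i \in S, (2 <= #|S|)%N &
        p = xset (S :\ i) * xset [set i] - xset S * xset set0].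
Definition L_G := ideal_gen L_gens.

Definition quad_binomial (p : RG) :=
  exists a b c e : stype, p = xvar a * xvar b - xvar c * xvar e.

(* I_G is generated by quadratic binomials (includes I_G = 0, via B empty) *)
Definition IG_gen_by_quad_binomials :=
  exists B : RG -> Prop,
    (forall p, B p -> quad_binomial p) /\ ideal_eq I_G (ideal_gen B).

Definition compl_has_triangle :=
  exists a b c : 'I_d,
    [/\ a != b, b != c & a != c] /\ [/\ ~~ G a b, ~~ G b c & ~~ G a c].

Definition complete_multipartite_le3 :=
  exists P : {set {set 'I_d}},
    [/\ partition P [set: 'I_d],
        (forall i j, G i j = (pblock P i != pblock P j)) &
        (forall V, V \in P -> (#|V| <= 3)%N)].

End Defs.

Arguments I_G K {d} G _.
Arguments I_G2 K {d} G _.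
Arguments J_G K {d} G _.
Arguments L_G K {d} G _.
Arguments IG_gen_by_quad_binomials K {d} G.
Arguments compl_has_triangle {d} G.
Arguments complete_multipartite_le3 {d} G.
Arguments prime_ideal {K d G} I.
Arguments ideal_eq {K d G} I J.
Arguments simple_graph {d} G.

From Pilot Require Import Defs.
From HB Require Import structures.
From mathcomp Require Import all_boot all_algebra.
From mathcomp Require Import mpoly.
From mathcomp Require Import ring.
Set Implicit Arguments. Unset Strict Implicit. Unset Printing Implicit Defensive.
Import GRing.Theory.
Local Open Scope ring_scope.

(* [I_G] is the kernel of the monomial map [pi], so it is prime and spanned by
   the binomials [x^a - x^b] with [pi x^a = pi x^b]; in degree 2 these are the
   [x_A x_B - x_C x_D] with [A + B = C + D] as multisets, which gives (b).

   (a) Modulo [L_G], [x_emptyset^|S| x_S] is congruent to [x_emptyset] times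
   the product of the [x_{i}], i in S; substituting back into a homogenized
   version of [pi] shows that [x_emptyset^N f] lies in [L_G] for every [f] in
   [I_G]. As [x_emptyset] is not in [I_G], a prime ideal between [L_G] and
   [I_G] is [I_G].

   (c), (d) Non-membership is shown by evaluating each [x_S] at the indicator
   of a family of stable sets that kills every generator of the smaller ideal.
   A quadratic binomial [x_A x_B - x_C x_D] of [I_G] is a generator of [J_G]
   when [A] and [B] are disjoint, and is zero when they meet, unless one of the
   four sets contains a triangle of the complement of [G]. If [J_G = L_G],
   non-adjacency is transitive and stable sets have at most three elements, so
   [G] is complete multipartite with parts of size at most 3; conversely, in
   such a graph every generator of [J_G] is zero or a difference of two
   elements [x_S1 x_S2 - x_emptyset x_(S1 :|: S2)] of [L_G]. *)

(** * Ideals *)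

Section Ideals.
Variable R : comPzRingType.

Definition is_ideal (I : R -> Prop) :=
  [/\ I 0, (forall p q, I p -> I q -> I (p + q)) & (forall p q, I q -> I (p * q))].

Lemma kernel_ideal (S : pzRingType) (f : {rmorphism R -> S}) :
  is_ideal (fun p => f p = 0).
Proof.
split=> [|p q fp fq|p q fq]; first exact: rmorph0.
  by rewrite rmorphD fp fq addr0.
by rewrite rmorphM fq mulr0.
Qed.

Variables (I : R -> Prop) (idealI : is_ideal I).

Lemma ideal0 : I 0. Proof. by case: idealI. Qed.

Lemma idealD p q : I p -> I q -> I (p + q). Proof. by case: idealI => _ + _; apply. Qed.

Lemma idealMl p q : I q -> I (p * q). Proof. by case: idealI => _ _; apply. Qed.

Lemma idealB p q : I p -> I q -> I (p - q).
Proof. by move=> Ip Iq; apply: idealD => //; rewrite -mulN1r; apply: idealMl. Qed.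

Lemma ideal_sum (J : Type) (r : seq J) (P : pred J) (F : J -> R) :
  (forall j, P j -> I (F j)) -> I (\sum_(j <- r | P j) F j).
Proof.
move=> IF; elim: r => [|j r IHr]; first by rewrite big_nil; exact: ideal0.
by rewrite big_cons; case: ifP => // Pj; apply: idealD => //; apply: IF.
Qed.

Lemma ideal_congrM a b c e : I (a - b) -> I (c - e) -> I (a * c - b * e).
Proof.
move=> Iab Ice; have -> : a * c - b * e = c * (a - b) + b * (c - e) by ring.
by apply: idealD; apply: idealMl.
Qed.

Lemma ideal_congr_prod (J : Type) (r : seq J) (a b : J -> R) (m : J -> nat) :
  (forall j, I (a j - b j)) ->
  I (\prod_(j <- r) a j ^+ m j - \prod_(j <- r) b j ^+ m j).
Proof.
move=> Iab; elim: r => [|j r IHr]; first by rewrite !big_nil subrr; exact: ideal0.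
rewrite !big_cons; apply: ideal_congrM => //.
elim: (m j) => [|k IHk]; first by rewrite !expr0 subrr; exact: ideal0.
by rewrite !exprS; apply: ideal_congrM.
Qed.

End Ideals.

(** * Monomial substitutions *)

Section MonomialSubstitution.
Variables (K : comNzRingType) (n k : nat) (e : 'I_n -> 'X_{1..k}).

Definition mon_exp (m : 'X_{1..n}) : 'X_{1..k} := (\sum_(i < n) e i *+ m i)%MM.
Definition mon_tuple : n.-tuple {mpoly K[k]} := [tuple 'X_[e i] | i < n].

Lemma mon_expE m c : mon_exp m c = (\sum_(i < n) e i c * m i)%N.
Proof. by rewrite /mon_exp mnm_sumE; apply: eq_bigr => i _; rewrite mulmnE. Qed.

Lemma mon_expD m1 m2 : mon_exp (m1 + m2)%MM = (mon_exp m1 + mon_exp m2)%MM.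
Proof.
apply/mnmP => c; rewrite mnmDE !mon_expE -big_split /=.
by apply: eq_bigr => i _; rewrite mnmDE mulnDr.
Qed.

Lemma mon_exp1 i : mon_exp U_(i)%MM = e i.
Proof.
apply/mnmP => c; rewrite mon_expE (bigD1 i) //= mnm1E eqxx muln1 big1 ?addn0 //.
by move=> j /negbTE; rewrite mnm1E eq_sym => ->; rewrite muln0.
Qed.

Lemma comp_mon_tupleX m : 'X_[m] \mPo mon_tuple = 'X_[mon_exp m].
Proof.
rewrite comp_mpolyX /mon_exp.
rewrite (big_morph (fun m : 'X_{1..k} => 'X_[m] : {mpoly K[k]})
  (@mpolyXD _ _) (@mpolyX0 _ _)).
by apply: eq_bigr => i _; rewrite tnth_mktuple mpolyXn.
Qed.

Lemma mcoeff_comp_mon_tuple (p : {mpoly K[n]}) u :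
  (p \mPo mon_tuple)@_u = \sum_(m <- msupp p | mon_exp m == u) p@_m.
Proof.
rewrite comp_mpolyEX raddf_sum /= [RHS]big_mkcond /=; apply: eq_bigr => m _.
by rewrite mcoeffZ comp_mon_tupleX mcoeffX; case: eqP; rewrite ?mulr1 ?mulr0.
Qed.

Lemma comp_mon_tuple_eq0 (p : {mpoly K[n]}) :
  injective mon_exp -> p \mPo mon_tuple = 0 -> p = 0.
Proof.
move=> inj_exp p0; apply/mpolyP => a; rewrite mcoeff0.
have := congr1 (mcoeff (mon_exp a)) p0; rewrite mcoeff_comp_mon_tuple mcoeff0.
under eq_bigl do rewrite (inj_eq inj_exp).
have [a_p|] := boolP (a \in msupp p); last by rewrite mcoeff_msupp negbK => /eqP.
rewrite -big_filter; have -> : [seq m <- msupp p | m == a] = [:: a].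
  by rewrite -(filter_pred1_uniq (msupp_uniq p) a_p); apply: eq_filter => m; rewrite eq_sym.
by rewrite big_seq1.
Qed.

(* Every [m] in the support is sent to a fixed representative [r m] of its
   fibre; the coefficients of [p] summed over a fibre vanish, so [p] equals
   [\sum_m p_m (X^m - X^(r m))]. *)
Lemma kernel_mon_tuple_binomials (I : {mpoly K[n]} -> Prop) (p : {mpoly K[n]}) :
  is_ideal I -> p \mPo mon_tuple = 0 ->
  {in msupp p &, forall a b, mon_exp a = mon_exp b -> I ('X_[a] - 'X_[b])} ->
  I p.
Proof.
move=> idealI p0 Ibin; set s := msupp p.
pose fibre m := [seq m' <- s | mon_exp m' == mon_exp m].
pose r m := nth m (fibre m) 0.
have fibre_gt0 m : m \in s -> (0 < size (fibre m))%N.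
  by move=> ms; rewrite size_filter -has_count; apply/hasP; exists m => /=.
have r_fibre m : m \in s -> r m \in s /\ mon_exp (r m) = mon_exp m.
  move=> ms; have : r m \in fibre m by apply: mem_nth; apply: fibre_gt0.
  by rewrite mem_filter => /andP [/eqP -> ->].
have r_eq m u : m \in s -> mon_exp m = mon_exp u -> r m = r u.
  by move=> ms eqmu; rewrite /r /fibre -eqmu; apply: set_nth_default; apply: fibre_gt0.
have r_eqE m u : m \in s -> (r m == u) = (mon_exp m == mon_exp u) && (r u == u).
  move=> ms; have [rs rexp] := r_fibre m ms; apply/idP/idP.
    by move/eqP => <-; rewrite rexp eqxx /=; apply/eqP; apply: r_eq.
  by case/andP => /eqP eqmu /eqP ru; rewrite (r_eq m u ms eqmu) ru.
have sum_r : \sum_(m <- s) p@_m *: ('X_[r m] : {mpoly K[n]}) = 0.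
  apply/mpolyP => u; rewrite mcoeff0 raddf_sum /=.
  transitivity (\sum_(m <- s | mon_exp m == mon_exp u) p@_m * (r u == u)%:R).
    rewrite [RHS]big_mkcond /= big_seq [RHS]big_seq; apply: eq_bigr => m ms.
    by rewrite mcoeffZ mcoeffX (r_eqE m u ms); case: (_ == _); rewrite ?mulr0.
  by rewrite -big_distrl /= -mcoeff_comp_mon_tuple p0 mcoeff0 mul0r.
have -> : p = \sum_(m <- s) p@_m *: ('X_[m] - 'X_[r m]).
  under eq_bigr do rewrite scalerBr.
  by rewrite sumrB sum_r subr0 {1}(mpolyE p).
rewrite big_seq; apply: (ideal_sum idealI) => m ms.
have [rs rexp] := r_fibre m ms.
by rewrite -mul_mpolyC; apply: (idealMl idealI); apply: Ibin; rewrite ?rexp.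
Qed.

Lemma mdeg_eq2_split (m : 'X_{1..n}) : mdeg m = 2%N -> exists i j, m = (U_(i) + U_(j))%MM.
Proof.
move=> m2; have [i mi|m0] := pickP (fun i => m i != 0%N); last first.
  suff m_eq0 : m = 0%MM by rewrite m_eq0 mdeg0 in m2.
  by apply/mnmP => i; rewrite mnm0E; apply/eqP/negPn; rewrite m0.
have le_m : (U_(i) <= m)%MM.
  by apply/mnm_lepP => j; rewrite mnm1E; case: eqP => [<-|]; rewrite ?lt0n.
have /mdeg1P [j /eqP mj] : mdeg (m - U_(i))%MM == 1%N.
  by move: m2; rewrite -{1}(submK le_m) mdegD mdeg1 addn1 => -[->].
by exists j, i; rewrite -mj submK.
Qed.

Lemma kernel_mon_tuple_homog2 (I : {mpoly K[n]} -> Prop) (p : {mpoly K[n]}) :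
  is_ideal I -> p \mPo mon_tuple = 0 -> p \is 2.-homog ->
  (forall i1 j1 i2 j2, mon_exp (U_(i1) + U_(j1))%MM = mon_exp (U_(i2) + U_(j2))%MM ->
     I ('X_i1 * 'X_j1 - 'X_i2 * 'X_j2)) ->
  I p.
Proof.
move=> idealI p0 /dhomogP p2 Ibin; apply: kernel_mon_tuple_binomials => // a b ap bp.
have [i1 [j1 ->]] := mdeg_eq2_split (p2 a ap).
have [i2 [j2 ->]] := mdeg_eq2_split (p2 b bp).
by rewrite !mpolyXD; apply: Ibin.
Qed.

End MonomialSubstitution.

Section CompMpoly.
Variables (K : comNzRingType) (n k l : nat).

Lemma comp_mpoly_tnthX (i : 'I_n) (lq : n.-tuple {mpoly K[k]}) :
  'X_i \mPo lq = tnth lq i.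
Proof. by rewrite comp_mpolyXU (tnth_nth 0). Qed.

Lemma comp_mpolyA (p : {mpoly K[n]}) (lq : n.-tuple {mpoly K[k]})
    (lr : k.-tuple {mpoly K[l]}) :
  (p \mPo lq) \mPo lr = p \mPo [tuple tnth lq i \mPo lr | i < n].
Proof.
rewrite (comp_mpolyEX p lq) (comp_mpolyEX p) raddf_sum; apply: eq_bigr => m _.
transitivity ((p@_m *: ('X_[m] \mPo lq)) \mPo lr); first by [].
rewrite comp_mpolyZ !comp_mpolyX rmorph_prod; congr (_ *: _).
by apply: eq_bigr => i _; rewrite rmorphXn tnth_mktuple.
Qed.

End CompMpoly.

Lemma widen_ord_max_lift n (j : 'I_n) : widen_ord (leqnSn n) j = lift ord_max j.
Proof. by apply: val_inj; rewrite /= /bump leqNgt ltn_ord. Qed.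

Lemma unlift_max_widen n (j : 'I_n) : unlift ord_max (widen_ord (leqnSn n) j) = Some j.
Proof. by rewrite widen_ord_max_lift liftK. Qed.

Lemma prodr_in_exp (R : pzSemiRingType) n (F : 'I_n -> R) (S : {set 'I_n}) :
  \prod_(j in S) F j = \prod_(j < n) F j ^+ (j \in S).
Proof. by rewrite big_mkcond; apply: eq_bigr => j _; case: (j \in S); rewrite ?expr1. Qed.

(** * The ring of stable sets and the map [pi] *)

Section GeneratedIdeals.
Variables (K : fieldType) (d : nat) (G : rel 'I_d).
Local Notation R := {mpoly K[nvar G]}.

Lemma ideal_gen_ideal (A : R -> Prop) : is_ideal (ideal_gen A).
Proof.
split.
- by exists [::]; rewrite big_nil.
- move=> _ _ [s1 [As1 ->]] [s2 [As2 ->]]; exists (s1 ++ s2); split; last by rewrite big_cat.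
  by move=> c; rewrite mem_cat => /orP [] ?; [apply: As1 | apply: As2].
- move=> p _ [s [As ->]]; exists [seq (p * c.1, c.2) | c <- s]; split.
    by move=> x /mapP [c cs ->]; exact: As cs.
  by rewrite mulr_sumr big_map; apply: eq_bigr => c _; rewrite mulrA.
Qed.

Lemma ideal_gen_mem (A : R -> Prop) p : A p -> ideal_gen A p.
Proof.
move=> Ap; exists [:: (1, p)]; split; last by rewrite big_seq1 mul1r.
by move=> c; rewrite inE => /eqP ->.
Qed.

Lemma ideal_gen_min (A I : R -> Prop) : is_ideal I -> (forall p, A p -> I p) ->
  forall p, ideal_gen A p -> I p.
Proof.
move=> idealI AI _ [s [As ->]]; rewrite big_seq; apply: (ideal_sum idealI) => c cs.
by apply: (idealMl idealI); apply/AI/As.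
Qed.

Lemma ideal_gen_sub (A B : R -> Prop) : (forall p, A p -> ideal_gen B p) ->
  forall p, ideal_gen A p -> ideal_gen B p.
Proof. by move=> AB; apply: ideal_gen_min AB; apply: ideal_gen_ideal. Qed.

End GeneratedIdeals.

Section StableSetRing.
Variables (K : fieldType) (d : nat) (G : rel 'I_d).
Local Notation R := {mpoly K[nvar G]}.
Local Notation xs := (xset K G).
Local Notation pi := (@Defs.pi K d G).

Lemma stableP (S : {set 'I_d}) :
  reflect {in S &, forall i j, ~~ G i j} (stable G S).
Proof.
apply: (iffP forallP) => [stS i j iS jS|stS i].
  by move/forallP: (stS i) => /(_ j) /implyP; apply; rewrite iS jS.
by apply/forallP => j; apply/implyP => /andP [iS jS]; apply: stS.
Qed.

Lemma stableS (S S' : {set 'I_d}) : S' \subset S -> stable G S -> stable G S'.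
Proof. by move=> /subsetP sub /stableP stS; apply/stableP => i j /sub iS /sub; apply: stS. Qed.

Lemma stable_set0 : stable G set0.
Proof. by apply/stableP => i j; rewrite inE. Qed.

Lemma stable_setD1 S i : stable G S -> stable G (S :\ i).
Proof. exact/stableS/subD1set. Qed.

Definition varset (k : 'I_(nvar G)) : {set 'I_d} := val (enum_val k).

Lemma varset_stable k : stable G (varset k). Proof. exact: valP. Qed.

Lemma xset_varset k : xs (varset k) = 'X_k.
Proof. by rewrite /xset /varset valK /xvar enum_valK. Qed.

Lemma xvar_enum_val k : xvar K (enum_val k) = 'X_k :> R.
Proof. by rewrite /xvar enum_valK. Qed.

Lemma varset_rank S (stS : stable G S) : varset (enum_rank (Sub S stS : stype G)) = S.
Proof. by rewrite /varset enum_rankK. Qed.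

Lemma xset_stable S (stS : stable G S) : xs S = 'X_(enum_rank (Sub S stS : stype G)).
Proof. by rewrite -xset_varset varset_rank. Qed.

Lemma homog2_XX (k l : 'I_(nvar G)) : ('X_k * 'X_l : R) \is 2.-homog.
Proof. by rewrite -mpolyXD dhomogX /= mdegD !mdeg1. Qed.

Lemma homog2_xset_binomial A B C D :
  stable G A -> stable G B -> stable G C -> stable G D ->
  xs A * xs B - xs C * xs D \is 2.-homog.
Proof.
move=> stA stB stC stD.
rewrite (xset_stable stA) (xset_stable stB) (xset_stable stC) (xset_stable stD).
by rewrite rpredB ?homog2_XX.
Qed.

(* The exponent of [pi x_k = s * \prod_(j in varset k) t_j]; [s] is the variable
   [ord_max] and [t_j] the variable [lift ord_max j]. *)
Definition pi_exp (k : 'I_(nvar G)) : 'X_{1..d.+1} :=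
  [multinom if unlift (@ord_max d) c is Some j then nat_of_bool (j \in varset k) else 1%N
  | c < d.+1].

Lemma pi_img_exp k : pi_img K k = 'X_[pi_exp k].
Proof.
rewrite mpolyXE_id big_ord_recr /= mnmE unlift_none expr1 /pi_img mulrC prodr_in_exp.
by congr (_ * _); apply: eq_bigr => j _; rewrite mnmE unlift_max_widen.
Qed.

Lemma piE p : pi p = p \mPo mon_tuple K pi_exp.
Proof.
congr (comp_mpoly _ p); apply: eq_from_tnth => k.
by rewrite !tnth_mktuple pi_img_exp.
Qed.

Lemma piM p q : pi (p * q) = pi p * pi q. Proof. exact: rmorphM. Qed.

Lemma piB p q : pi (p - q) = pi p - pi q. Proof. exact: rmorphB. Qed.

Lemma I_G_ideal : is_ideal (I_G K G).
Proof. exact: (kernel_ideal (comp_mpoly _)). Qed.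

Lemma I_G_prime : prime_ideal (I_G K G).
Proof.
split=> [|a b]; first by rewrite /I_G /Defs.pi rmorph1; apply/eqP; rewrite oner_eq0.
by rewrite /I_G piM => /eqP; rewrite mulf_eq0 => /orP [] /eqP; [left | right].
Qed.

Lemma pi_xset S : stable G S -> pi (xs S) = svar K d * \prod_(j in S) tvar K j.
Proof.
move=> stS; rewrite (xset_stable stS) /Defs.pi comp_mpoly_tnthX tnth_mktuple /pi_img.
by rewrite -/(varset _) varset_rank.
Qed.

Lemma I_G_xset_binomial A B C D :
  stable G A -> stable G B -> stable G C -> stable G D ->
  (forall j, (j \in A) + (j \in B) = (j \in C) + (j \in D))%N ->
  I_G K G (xs A * xs B - xs C * xs D).
Proof.
move=> stA stB stC stD count_eq.
have pi_pair X Y : stable G X -> stable G Y -> pi (xs X * xs Y) =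
    svar K d ^+ 2 * \prod_(j < d) tvar K j ^+ ((j \in X) + (j \in Y))%N.
  move=> stX stY; rewrite piM !pi_xset // !prodr_in_exp.
  by rewrite mulrACA -expr2 -big_split; congr (_ * _); apply: eq_bigr => j _; rewrite exprD.
by rewrite /I_G piB !pi_pair //; under eq_bigr do rewrite count_eq; rewrite subrr.
Qed.

Lemma I_G_homog2 (I : R -> Prop) (p : R) : is_ideal I -> I_G K G p -> p \is 2.-homog ->
  (forall k1 l1 k2 l2,
     (forall j, (j \in varset k1) + (j \in varset l1) = (j \in varset k2) + (j \in varset l2))%N ->
     I ('X_k1 * 'X_l1 - 'X_k2 * 'X_l2)) ->
  I p.
Proof.
move=> idealI p0 p2 Ibin; rewrite /I_G piE in p0.
apply: (kernel_mon_tuple_homog2 idealI p0 p2) => k1 l1 k2 l2.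
rewrite !mon_expD !mon_exp1 => /mnmP exp_eq; apply: Ibin => j.
by have := exp_eq (lift ord_max j); rewrite !mnmDE !mnmE liftK.
Qed.

Definition family_point (Z : {set 'I_d} -> bool) (k : 'I_(nvar G)) : K := (Z (varset k))%:R.

Lemma meval_xset_binomial Z A B C D :
  stable G A -> stable G B -> stable G C -> stable G D ->
  (xs A * xs B - xs C * xs D).@[family_point Z] = (Z A && Z B)%:R - (Z C && Z D)%:R.
Proof.
move=> stA stB stC stD; rewrite mevalB !mevalM.
rewrite (xset_stable stA) (xset_stable stB) (xset_stable stC) (xset_stable stD).
by rewrite !mevalXU /family_point !varset_rank; do 4!case: (Z _); rewrite ?mul1r ?mul0r.
Qed.

Lemma J_gens_I_G (p : R) : J_gens p -> I_G K G p.
Proof.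
have count_disj (X Y : {set 'I_d}) j :
    X :&: Y = set0 -> ((j \in X) + (j \in Y))%N = (j \in X :|: Y).
  by move/setP/(_ j); rewrite !inE; case: (j \in X); case: (j \in Y).
case=> [S1 [S2 [S3 [S4 [[st1 st2 st3 st4] [dis12 dis34 eqU ->]]]]]].
by apply: I_G_xset_binomial => // j; rewrite !count_disj // eqU.
Qed.

Lemma J_gens_homog2 (p : R) : J_gens p -> p \is 2.-homog.
Proof.
by case=> [S1 [S2 [S3 [S4 [[st1 st2 st3 st4] [_ _ _ ->]]]]]]; apply: homog2_xset_binomial.
Qed.

Lemma I_G_eq_I_G2_iff_quadratic :
  ideal_eq (I_G K G) (I_G2 K G) <-> IG_gen_by_quad_binomials K G.
Proof.
split=> [eqG2|[B [quadB eqB]] p].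
  pose B p := I_G K G p /\ quad_binomial p.
  exists B; split=> [p [] //|p]; split; last by apply: ideal_gen_min I_G_ideal _ p => q [].
  move/eqG2; apply: ideal_gen_sub => q [Gq q2].
  apply: (I_G_homog2 (ideal_gen_ideal _) Gq q2) => k1 l1 k2 l2 count_eq.
  apply: ideal_gen_mem; split.
    by rewrite -!xset_varset; apply: I_G_xset_binomial; rewrite ?varset_stable.
  by exists (enum_val k1), (enum_val l1), (enum_val k2), (enum_val l2); rewrite !xvar_enum_val.
have BG q : B q -> I_G K G q by move=> Bq; apply/eqB/ideal_gen_mem.
split; last by apply: ideal_gen_min I_G_ideal _ p => q [].
move/eqB; apply: ideal_gen_sub => q Bq; apply: ideal_gen_mem; split; first exact: BG.
by have [a [b [c [e ->]]]] := quadB q Bq; rewrite rpredB ?homog2_XX.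
Qed.

End StableSetRing.

(** * Primality and the localization at [x_emptyset] *)

Section SimpleGraph.
Variables (K : fieldType) (d : nat) (G : rel 'I_d) (simpleG : simple_graph G).
Local Notation R := {mpoly K[nvar G]}.
Local Notation T := {mpoly K[d.+1]}.
Local Notation xs := (xset K G).
Local Notation x0 := (xset K G set0).
Local Notation pi := (@Defs.pi K d G).
Local Notation LG := (L_G K G).

Lemma G_sym : ssrbool.symmetric G. Proof. by case: simpleG. Qed.

Lemma G_irr : irreflexive G. Proof. by case: simpleG. Qed.

Lemma stable_set1 i : stable G [set i].
Proof. by apply/stableP => a b; rewrite !inE => /eqP -> /eqP ->; rewrite G_irr. Qed.

Lemma stable_set2 a b : ~~ G a b -> stable G [set a; b].
Proof.
move=> nab; apply/stableP => i j; rewrite !inE.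
by case/orP => /eqP ->; case/orP => /eqP ->; rewrite ?G_irr // G_sym.
Qed.

Lemma stable_set3 a b c : ~~ G a b -> ~~ G b c -> ~~ G a c -> stable G [set a; b; c].
Proof.
move=> nab nbc nac; apply/stableP => i j; rewrite !inE.
by do 2!case/orP=> [/orP [] | ] /eqP ->; rewrite ?G_irr // G_sym.
Qed.

Lemma L_gens_I_G (p : R) : L_gens p -> I_G K G p.
Proof.
case=> S [i [stS iS _ ->]].
apply: I_G_xset_binomial; rewrite ?stable_setD1 ?stable_set1 ?stable_set0 // => j.
by rewrite !inE; case: eqVneq => [->|] /=; rewrite ?iS //; case: (j \in S).
Qed.

Lemma L_G_I_G (p : R) : LG p -> I_G K G p.
Proof. exact: ideal_gen_min (I_G_ideal K G) L_gens_I_G p. Qed.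

Lemma L_G_ideal : is_ideal LG. Proof. exact: ideal_gen_ideal. Qed.

(* For [S = {i}] the binomial is zero, so no size condition is needed. *)
Lemma L_G_peel S i : stable G S -> i \in S -> LG (xs (S :\ i) * xs [set i] - xs S * x0).
Proof.
move=> stS iS; have [S_gt1|] := ltnP 1 #|S|.
  by apply: ideal_gen_mem; exists S, i.
rewrite (cardsD1 i) iS ltnS leqn0 cards_eq0 => /eqP Si0.
have -> : S = [set i] by rewrite -(setD1K iS) Si0 setU0.
by rewrite setDv mulrC subrr; apply: ideal0 L_G_ideal.
Qed.

Lemma L_G_xset_singletons S : stable G S ->
  LG (x0 ^+ #|S| * xs S - x0 * \prod_(i in S) xs [set i]).
Proof.
move=> stS; have [n] := ubnP #|S|; elim: n S stS => // n IHn S stS cardS.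
have [->|[i iS]] := set_0Vmem S.
  by rewrite cards0 big_set0 expr0 mul1r mulr1 subrr; apply: ideal0 L_G_ideal.
rewrite (big_setD1 i iS) (cardsD1 i S) iS add1n /=.
set Si := S :\ i.
have -> : x0 ^+ #|Si|.+1 * xs S - x0 * (xs [set i] * \prod_(j in Si) xs [set j]) =
  xs [set i] * (x0 ^+ #|Si| * xs Si - x0 * \prod_(j in Si) xs [set j])
  - x0 ^+ #|Si| * (xs Si * xs [set i] - xs S * x0).
  by rewrite exprSr; ring.
apply: (idealB L_G_ideal); apply: (idealMl L_G_ideal); last exact: L_G_peel.
by apply: IHn; rewrite ?stable_setD1 // -ltnS (leq_trans _ cardS) // (cardsD1 i S) iS.
Qed.

(* [theta] is [pi] homogenized to degree [d + 1] by powers of [s], and [eta]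
   substitutes [x_{j}] for [t_j] and [x_emptyset] for [s]; modulo [L_G],
   [eta (theta x_S) = x_emptyset^d x_S] (lemma [L_G_theta_var]). *)
Definition eta_tuple : d.+1.-tuple R :=
  [tuple if unlift ord_max c is Some i then xs [set i] else x0 | c < d.+1].
Local Notation eta p := (p \mPo eta_tuple).

Definition theta_tuple : (nvar G).-tuple T :=
  [tuple svar K d ^+ (d - #|varset k|) * pi_img K k | k < nvar G].

Lemma eta_svar : eta (svar K d) = x0.
Proof. by rewrite comp_mpoly_tnthX tnth_mktuple unlift_none. Qed.

Lemma eta_tvar i : eta (tvar K i) = xs [set i].
Proof. by rewrite comp_mpoly_tnthX tnth_mktuple unlift_max_widen. Qed.

Lemma L_G_theta_var k : LG (x0 ^+ d * 'X_k - eta (tnth theta_tuple k)).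
Proof.
rewrite tnth_mktuple /pi_img !rmorphM rmorphXn rmorph_prod /= eta_svar.
under eq_bigr do rewrite eta_tvar.
have cardS : (#|varset k| <= d)%N by rewrite -[X in (_ <= X)%N]card_ord max_card.
have -> : x0 ^+ d = x0 ^+ (d - #|varset k|) * x0 ^+ #|varset k| by rewrite -exprD subnK.
rewrite -/(varset k) -xset_varset -mulrA -mulrBr.
exact/(idealMl L_G_ideal)/L_G_xset_singletons/varset_stable.
Qed.

Lemma L_G_theta_monomial m :
  LG (x0 ^+ (d * mdeg m) * 'X_[m] - eta ('X_[m] \mPo theta_tuple)).
Proof.
rewrite comp_mpolyX rmorph_prod /= mpolyXE_id mdegE exprM -prodrXr -big_split /=.
under eq_bigr do rewrite -exprMn.
under [X in _ - X]eq_bigr do rewrite rmorphXn.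
by apply: (ideal_congr_prod L_G_ideal) => k; apply: L_G_theta_var.
Qed.

Lemma L_G_theta (f : R) : exists h, LG (x0 ^+ (d * msize f) * f - eta h).
Proof.
set N := (d * msize f)%N; pose Y m := 'X_[m] \mPo theta_tuple.
exists (\sum_(m <- msupp f) f@_m *: (svar K d ^+ (N - d * mdeg m) * Y m)).
have -> : eta (\sum_(m <- msupp f) f@_m *: (svar K d ^+ (N - d * mdeg m) * Y m)) =
    \sum_(m <- msupp f) f@_m *: (x0 ^+ (N - d * mdeg m) * eta (Y m)).
  rewrite raddf_sum; apply: eq_bigr => m _.
  transitivity (eta (f@_m *: (svar K d ^+ (N - d * mdeg m) * Y m))); first by [].
  by rewrite comp_mpolyZ rmorphM rmorphXn /= eta_svar.
rewrite [X in x0 ^+ N * X]mpolyE mulr_sumr -sumrB big_seq.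
apply: (ideal_sum L_G_ideal) => m mf.
rewrite -scalerAr -scalerBr -mul_mpolyC; apply: (idealMl L_G_ideal).
have le_N : (d * mdeg m <= N)%N by rewrite leq_mul2l ltnW ?orbT ?msize_mdeg_lt.
have -> : x0 ^+ N = x0 ^+ (N - d * mdeg m) * x0 ^+ (d * mdeg m) by rewrite -exprD subnK.
rewrite -mulrA -mulrBr; apply: (idealMl L_G_ideal).
exact: L_G_theta_monomial.
Qed.

Definition eta_exp (c : 'I_d.+1) : 'X_{1..d.+1} :=
  (U_(ord_max) + U_(c) *+ (c != ord_max))%MM.

Lemma pi_eta_tuple c : pi (tnth eta_tuple c) = 'X_[eta_exp c].
Proof.
rewrite tnth_mktuple /eta_exp; case: unliftP => [i ->|->].
  have -> : lift ord_max i != ord_max by rewrite eq_sym neq_lift.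
  rewrite pi_xset ?stable_set1 // big_set1 mpolyXD.
  by rewrite /tvar widen_ord_max_lift.
by rewrite pi_xset ?stable_set0 // big_set0 mulr1 eqxx addm0.
Qed.

Lemma pi_eta q : pi (eta q) = q \mPo mon_tuple K eta_exp.
Proof.
rewrite piE comp_mpolyA; congr (comp_mpoly _ q); apply: eq_from_tnth => c.
by rewrite [LHS]tnth_mktuple [RHS]tnth_mktuple -piE pi_eta_tuple.
Qed.

Lemma mon_eta_expE m c :
  mon_exp eta_exp m c = if c == ord_max then mdeg m else m c.
Proof.
rewrite mon_expE mdegE; case: eqP => [->|/eqP c_max].
  apply: eq_bigr => i _; rewrite mnmDE mulmnE !mnm1E eqxx.
  by case: (i == _); rewrite /= ?muln0 ?mul1n.
have max_c : (ord_max == c) = false by rewrite eq_sym (negbTE c_max).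
rewrite (bigD1 c) //= big1 ?addn0 => [|i /negbTE ic].
  by rewrite mnmDE mulmnE !mnm1E eqxx max_c c_max add0n !mul1n.
by rewrite mnmDE mulmnE !mnm1E ic max_c add0n !mul0n.
Qed.

Lemma mon_eta_exp_inj : injective (mon_exp eta_exp).
Proof.
move=> a b eq_ab; have eq_c c : c != ord_max -> a c = b c.
  move=> /negbTE c_max; have := congr1 (fun m : 'X_{1..d.+1} => m c) eq_ab.
  by rewrite !mon_eta_expE c_max.
apply/mnmP => c; have [->|/eq_c //] := eqVneq c ord_max.
have := congr1 (fun m : 'X_{1..d.+1} => m ord_max) eq_ab; rewrite !mon_eta_expE eqxx !mdegE.
rewrite (bigD1 ord_max) //= [in RHS](bigD1 ord_max) //=.
by rewrite (eq_bigr (fun c => b c)) => [/addIn|c' /eq_c].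
Qed.

Lemma I_G_localization f : I_G K G f -> exists N, LG (x0 ^+ N * f).
Proof.
move=> f0; exists (d * msize f)%N; have [h Lh] := L_G_theta f.
suff h0 : h = 0 by move: Lh; rewrite h0 comp_mpoly0 subr0.
apply: (comp_mon_tuple_eq0 mon_eta_exp_inj); rewrite -pi_eta.
have := L_G_I_G Lh; rewrite /I_G piB piM f0 mulr0 sub0r => /eqP.
by rewrite oppr_eq0 => /eqP.
Qed.

Lemma x_empty_notin_I_G : ~ I_G K G x0.
Proof.
rewrite /I_G pi_xset ?stable_set0 // big_set0 mulr1.
move/(congr1 (mcoeff U_(ord_max))); rewrite mcoeffX eqxx mcoeff0 => /eqP.
by rewrite oner_eq0.
Qed.

(* Every [f] in [I_G] has a multiple [x_emptyset^N f] in [L_G], while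
   [x_emptyset] is not in [I_G]. *)
Lemma prime_iff_eq_I_G (A : R -> Prop) :
  (forall p, L_gens p -> ideal_gen A p) -> (forall p, A p -> I_G K G p) ->
  prime_ideal (ideal_gen A) <-> ideal_eq (ideal_gen A) (I_G K G).
Proof.
move=> LA AI; have AG := ideal_gen_min (I_G_ideal K G) AI.
split=> [[_ primeA] f|eqA]; last first.
  have [notG1 primeG] := I_G_prime K G; split; first by move/eqA/notG1.
  by move=> a b /eqA /primeG [] /eqA; [left | right].
split; first exact: AG.
move=> /I_G_localization [N /(ideal_gen_sub LA)].
elim: N => [|N IHN]; first by rewrite expr0 mul1r.
by rewrite exprS -mulrA => /primeA [/AG /x_empty_notin_I_G|].
Qed.

Lemma L_gens_J_gens (p : R) : L_gens p -> J_gens p.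
Proof.
case=> S [i [stS iS _ ->]]; exists (S :\ i), [set i], S, set0.
split; first by split; rewrite ?stable_setD1 ?stable_set1 ?stable_set0.
split; rewrite ?setI0 ?setU0 1?setUC ?setD1K //.
by apply/setP => j; rewrite !inE; case: eqP; rewrite ?andbF.
Qed.

Lemma prime_ideals_iff_eq_I_G :
  [/\ (prime_ideal (I_G2 K G) <-> ideal_eq (I_G2 K G) (I_G K G)),
      (prime_ideal (J_G K G) <-> ideal_eq (J_G K G) (I_G K G))
    & (prime_ideal LG <-> ideal_eq LG (I_G K G))].
Proof.
split; apply: prime_iff_eq_I_G => p.
- move=> Lp; apply: ideal_gen_mem; split; first exact: L_gens_I_G.
  exact/J_gens_homog2/L_gens_J_gens.
- by case.
- by move/L_gens_J_gens; apply: ideal_gen_mem.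
- exact: J_gens_I_G.
- exact: ideal_gen_mem.
- exact: L_gens_I_G.
Qed.

(** * Triangles in the complement graph *)

Lemma J_G_family_point Z (p : R) :
  (forall X Y, X :&: Y = set0 -> Z X && Z Y = false) ->
  J_G K G p -> p.@[family_point K Z] = 0.
Proof.
move=> Z_disj; apply: ideal_gen_min (kernel_ideal (meval _)) _ p => q.
case=> [S1 [S2 [S3 [S4 [[st1 st2 st3 st4] [dis12 dis34 _ ->]]]]]] /=.
by rewrite meval_xset_binomial // !Z_disj // subrr.
Qed.

(* If [a], [b], [c] are pairwise non-adjacent, the binomial
   [x_{a,b} x_{b,c} - x_{a,b,c} x_{b}] of [I_G] is not in [J_G]: it does not
   vanish at the indicator of the 2-sets containing [b], whereas the generators
   of [J_G] do, as these 2-sets pairwise intersect. *)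
Lemma compl_triangle_I_G2_neq_J_G :
  compl_has_triangle G -> ~ ideal_eq (I_G2 K G) (J_G K G).
Proof.
move=> [a [b [c [[neab nebc neac] [Gab Gbc Gac]]]]] eqJ.
have stab := stable_set2 Gab; have stbc := stable_set2 Gbc.
have stabc := stable_set3 Gab Gbc Gac; have stb := stable_set1 b.
pose Z (X : {set 'I_d}) := (b \in X) && (#|X| == 2).
have : (xs [set a; b] * xs [set b; c] - xs [set a; b; c] * xs [set b]).@[family_point K Z] = 0.
  apply: J_G_family_point => [X Y XY0|].
    apply/negbTE/andP => -[/andP [bX _] /andP [bY _]].
    by move/setP: XY0 => /(_ b); rewrite !inE bX bY.
  apply/eqJ/ideal_gen_mem; split; last exact: homog2_xset_binomial.
  apply: I_G_xset_binomial => // j; rewrite !inE.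
  have [->|ja] := eqVneq j a; first by rewrite (negbTE neab) (negbTE neac).
  by have [->|jb] := eqVneq j b; rewrite //= addn0.
rewrite meval_xset_binomial // /Z !inE !eqxx /= ?orbT !cards2 cards1 neab nebc /=.
by rewrite andbF subr0 => /eqP; rewrite oner_eq0.
Qed.

Lemma stable_compl_triangle X x y z : stable G X ->
  x \in X -> y \in X -> z \in X -> x != y -> y != z -> x != z -> compl_has_triangle G.
Proof.
move=> /stableP stX xX yX zX nexy neyz nexz; exists x, y, z.
by split; split=> //; apply: stX.
Qed.

Lemma fiber_pairs_eq A B C D j0 : ~ compl_has_triangle G ->
  stable G A -> stable G B -> stable G C -> stable G D ->
  (forall j, (j \in A) + (j \in B) = (j \in C) + (j \in D))%N ->
  j0 \in A -> j0 \in B -> (A = C /\ B = D) \/ (A = D /\ B = C).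
Proof.
move=> notri stA stB stC stD count_eq j0A j0B.
have /andP [j0C j0D] : (j0 \in C) && (j0 \in D).
  by move: (count_eq j0); rewrite j0A j0B; do 2!case: (j0 \in _).
have eq_rest (X Y : {set 'I_d}) : A = X ->
    (forall j, (j \in A) + (j \in B) = (j \in X) + (j \in Y))%N -> B = Y.
  move=> <- cnt; apply/setP => j; move/eqP: (cnt j); rewrite eqn_add2l.
  by do 2!case: (j \in _).
have witness (X Y : {set 'I_d}) : X != Y -> exists j, (j \in X) != (j \in Y).
  move=> neXY; apply/existsP; apply: contraNT neXY => /existsPn eqXY.
  by apply/eqP/setP => j; apply/eqP/negPn/eqXY.
have [AC|/witness [j1 j1AC]] := eqVneq A C; first by left; split; last exact: eq_rest count_eq.
have [AD|/witness [j2 j2AD]] := eqVneq A D.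
  by right; split; last by apply: eq_rest AD _ => j; rewrite [RHS]addnC.
(* [j1] lies in exactly one of [A], [C], and [j2] in exactly one of [A], [D]; in
   each case one of the four sets contains the distinct [j0], [j1], [j2]. *)
exfalso; apply: notri; move: (count_eq j1) (count_eq j2) j1AC j2AD.
case A1: (j1 \in A); case B1: (j1 \in B); case C1: (j1 \in C); case D1: (j1 \in D);
case A2: (j2 \in A); case B2: (j2 \in B); case C2: (j2 \in C); case D2: (j2 \in D);
move=> // _ _ _ _;
first [ apply: (stable_compl_triangle stA j0A A1 A2)
      | apply: (stable_compl_triangle stB j0B B1 B2)
      | apply: (stable_compl_triangle stC j0C C1 C2)
      | apply: (stable_compl_triangle stD j0D D1 D2) ];
by apply/eqP => eq_j; subst; congruence.
Qed.

Lemma J_G_xset_binomial A B C D : ~ compl_has_triangle G ->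
  stable G A -> stable G B -> stable G C -> stable G D ->
  (forall j, (j \in A) + (j \in B) = (j \in C) + (j \in D))%N ->
  J_G K G (xs A * xs B - xs C * xs D).
Proof.
move=> notri stA stB stC stD count_eq.
have [AB0|[j0]] := set_0Vmem (A :&: B); last first.
  rewrite inE => /andP [j0A j0B].
  have [[-> ->]|[-> ->]] := fiber_pairs_eq notri stA stB stC stD count_eq j0A j0B;
    by rewrite ?[xs D * _]mulrC subrr; apply: ideal0 (ideal_gen_ideal _).
apply: ideal_gen_mem; exists A, B, C, D; split; first by split.
split=> //; apply/setP => j; have := count_eq j; move/setP: AB0 => /(_ j);
  by rewrite !inE; do 4!case: (j \in _).
Qed.

Lemma I_G2_eq_J_G_iff_no_compl_triangle :
  ideal_eq (I_G2 K G) (J_G K G) <-> ~ compl_has_triangle G.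
Proof.
split=> [eqJ tri|notri p]; first exact: compl_triangle_I_G2_neq_J_G.
split; apply: ideal_gen_sub => q; last first.
  by move=> Jq; apply: ideal_gen_mem; split; [apply: J_gens_I_G | apply: J_gens_homog2].
case=> Gq q2; apply: (I_G_homog2 (ideal_gen_ideal _) Gq q2) => k1 l1 k2 l2 count_eq.
by rewrite -!xset_varset; apply: J_G_xset_binomial; rewrite ?varset_stable.
Qed.

(** * Complete multipartite graphs *)

Lemma L_G_family_point Z (p : R) : Z set0 = false ->
  (forall S i, stable G S -> i \in S -> Z (S :\ i) && Z [set i] = false) ->
  LG p -> p.@[family_point K Z] = 0.
Proof.
move=> Z0 Z_peel; apply: ideal_gen_min (kernel_ideal (meval _)) _ p => q.
case=> S [i [stS iS _ ->]] /=.
by rewrite meval_xset_binomial ?stable_setD1 ?stable_set1 ?stable_set0 // Z_peel // Z0 andbF subrr.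
Qed.

Lemma setI_set2_eq0 (a b c e : 'I_d) :
  a != c -> a != e -> b != c -> b != e -> [set a; b] :&: [set c; e] = set0.
Proof.
move=> neac neae nebc nebe; apply: disjoint_setI0.
by rewrite disjoints_subset subUset !sub1set !inE !negb_or neac neae nebc nebe.
Qed.

(* [x_{a,b} x_{c} - x_{a} x_{b,c}] lies in [J_G]; if [a] and [c] are adjacent it
   does not vanish at the indicator of the sets separating [a] from [c] but not
   from [b], whereas the generators of [L_G] do. *)
Lemma J_G_eq_L_G_compl_trans a b c :
  ideal_eq (J_G K G) LG -> ~~ G a b -> ~~ G b c -> ~~ G a c.
Proof.
move=> eqL Gab Gbc; apply/negP => Gac.
have neab : a != b by apply: contraNneq Gbc => <-.
have nebc : b != c by apply: contraNneq Gab => ->.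
have neac : a != c by apply: contraTneq Gac => ->; rewrite G_irr.
pose Z (X : {set 'I_d}) := ((a \in X) != (c \in X)) && ((a \in X) == (b \in X)).
have stab := stable_set2 Gab; have stbc := stable_set2 Gbc.
have : (xs [set a; b] * xs [set c] - xs [set a] * xs [set b; c]).@[family_point K Z] = 0.
  apply: L_G_family_point => [|S i stS iS|]; first by rewrite /Z !inE.
    apply/negbTE/andP; rewrite /Z !inE => -[/andP [sep_Si _] /andP []].
    have [<-|neai] := eqVneq a i; first by move=> _ /eqP ba; move: neab; rewrite eq_sym -ba.
    move: sep_Si iS; have [<-|_ _ _ //] := eqVneq c i.
    rewrite neac /= => sep_S cS _ _.
    have aS : a \in S by move: sep_S; case: (a \in S).
    by move/stableP: stS => /(_ a c aS cS); rewrite Gac.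
  apply/eqL/ideal_gen_mem; exists [set a; b], [set c], [set a], [set b; c].
  split; first by split; rewrite ?stable_set1.
  split=> //; last by rewrite setUA.
    by rewrite -[[set c]]setUid setI_set2_eq0.
  by rewrite -[[set a]]setUid setI_set2_eq0.
rewrite meval_xset_binomial ?stable_set1 // /Z !inE !eqxx [c == a]eq_sym [c == b]eq_sym.
rewrite [b == a]eq_sym (negbTE neab) (negbTE nebc) (negbTE neac) /= subr0.
by move/eqP; rewrite oner_eq0.
Qed.

(* For distinct [a], [x], [y], [z] in a stable set, [x_{a,x} x_{y,z} - x_{a,y} x_{x,z}]
   lies in [J_G] but does not vanish at the indicator of the 2-sets not
   separating [a] from [x], whereas the generators of [L_G] do. *)
Lemma J_G_eq_L_G_stable_card S : ideal_eq (J_G K G) LG -> stable G S -> (#|S| <= 3)%N.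
Proof.
move=> eqL stS; rewrite leqNgt; apply/negP => S_gt3.
have [a aS] : exists a, a \in S by apply/card_gt0P; apply: leq_trans S_gt3.
have : (2 < #|S :\ a|)%N by move: S_gt3; rewrite (cardsD1 a) aS.
case/card_gt2P => x [y [z [[/setD1P [neax xS] /setD1P [neay yS] /setD1P [neaz zS]]
  [nexy neyz nezx]]]].
rewrite !(eq_sym _ a) in neax neay neaz.
have st2 u v : u \in S -> v \in S -> stable G [set u; v].
  by move=> uS vS; apply: stableS stS; rewrite subUset !sub1set uS vS.
pose Z (X : {set 'I_d}) := (#|X| == 2) && ((a \in X) == (x \in X)).
have : (xs [set a; x] * xs [set y; z] - xs [set a; y] * xs [set x; z]).@[family_point K Z] = 0.
  apply: L_G_family_point => [|S' i _ _|]; first by rewrite /Z cards0.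
    by rewrite /Z cards1 andbF.
  apply/eqL/ideal_gen_mem; exists [set a; x], [set y; z], [set a; y], [set x; z].
  split; first by split; apply: st2.
  split; rewrite ?setI_set2_eq0 // 1?eq_sym //.
  by apply/setP => u; rewrite !inE; do 4!case: (u == _).
rewrite meval_xset_binomial ?st2 // /Z !cards2 neax neyz neay !inE !eqxx.
rewrite (negbTE neax) (negbTE neay) (negbTE neaz) [x == a]eq_sym [x == z]eq_sym.
by rewrite (negbTE neax) (negbTE nexy) (negbTE nezx) /= subr0 => /eqP; rewrite oner_eq0.
Qed.

Lemma J_G_eq_L_G_multipartite : ideal_eq (J_G K G) LG -> complete_multipartite_le3 G.
Proof.
move=> eqL; pose E x y := ~~ G x y.
have E_equiv : {in [set: 'I_d] & &, equivalence_rel E}.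
  move=> x y z _ _ _; split; first by rewrite /E G_irr.
  move=> Exy; apply/idP/idP => [Exz|]; last exact: J_G_eq_L_G_compl_trans eqL Exy.
  by apply: J_G_eq_L_G_compl_trans eqL _ Exz; rewrite /E G_sym.
set P := equivalence_partition E [set: 'I_d].
have partP : partition P [set: 'I_d] := equivalence_partitionP E_equiv.
have pblockE x y : (y \in pblock P x) = E x y.
  by rewrite (pblock_equivalence_partition E_equiv) ?in_setT.
have [/eqP coverP trivP _] := and3P partP.
exists P; split=> // [i j|V PV].
  by rewrite eq_pblock ?coverP ?in_setT // pblockE /E negbK.
apply: J_G_eq_L_G_stable_card => //; apply/stableP => u v uV vV.
by rewrite -/(E u v) -pblockE (def_pblock trivP PV uV).
Qed.

Lemma L_G_disjoint_union S1 S2 : S1 :&: S2 = set0 -> stable G (S1 :|: S2) ->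
  (#|S1| <= 1)%N -> LG (xs S1 * xs S2 - x0 * xs (S1 :|: S2)).
Proof.
move=> dis12 stU; rewrite leq_eqVlt ltnS leqn0 cards_eq0 => /orP [/cards1P [i S1i]|/eqP ->].
  have iS2 : i \notin S2.
    by apply: contra_eqN dis12 => iS2; apply/set0Pn; exists i; rewrite S1i !inE eqxx.
  have := @L_G_peel (S1 :|: S2) i stU; rewrite S1i setU1K // [xs S2 * _]mulrC [_ * x0]mulrC.
  by apply; rewrite !inE eqxx.
by rewrite set0U subrr; apply: ideal0 L_G_ideal.
Qed.

Section Multipartite.
Variables (P : {set {set 'I_d}}) (partP : partition P [set: 'I_d])
  (G_pblock : forall i j, G i j = (pblock P i != pblock P j))
  (P_le3 : forall V, V \in P -> (#|V| <= 3)%N).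

Lemma nonadjE x y : ~~ G x y = (pblock P x == pblock P y).
Proof. by rewrite G_pblock negbK. Qed.

Lemma stable_card_le3 U : stable G U -> (#|U| <= 3)%N.
Proof.
move=> stU; have [->|[u uU]] := set_0Vmem U; first by rewrite cards0.
have cover_all w : w \in cover P by case/and3P: partP => /eqP ->; rewrite in_setT.
apply: leq_trans (P_le3 (pblock_mem (cover_all u))); apply/subset_leq_card/subsetP => v vU.
by move/stableP: stU => /(_ u v uU vU); rewrite nonadjE => /eqP ->; rewrite mem_pblock.
Qed.

(* The two parts of an unstable union lie in two different blocks. *)
Lemma mem_part_unstable_union S1 S2 x y : stable G S1 -> stable G S2 ->
  ~~ stable G (S1 :|: S2) -> x \in S1 -> y \in S1 :|: S2 -> (y \in S1) = ~~ G x y.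
Proof.
move=> /stableP st1 /stableP st2 unstU xS1; case/setUP => [yS1|yS2]; first by rewrite yS1 st1.
have [yS1|_] := boolP (y \in S1); first by rewrite st1.
apply/esym/negbTE/negP; rewrite nonadjE => /eqP pb_xy; case/negP: unstU.
have pbU w : w \in S1 :|: S2 -> pblock P w = pblock P x.
  case/setUP => wS; [move: (st1 x w xS1 wS) | move: (st2 y w yS2 wS)];
  by rewrite nonadjE => /eqP <-.
by apply/stableP => u v uU vU; rewrite nonadjE (pbU u uU) (pbU v vU).
Qed.

Lemma xset_binomial_unstable_union S1 S2 S3 S4 :
  stable G S1 -> stable G S2 -> stable G S3 -> stable G S4 ->
  S1 :&: S2 = set0 -> S3 :&: S4 = set0 -> S1 :|: S2 = S3 :|: S4 ->
  ~~ stable G (S1 :|: S2) -> xs S1 * xs S2 = xs S3 * xs S4.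
Proof.
move=> st1 st2 st3 st4 dis12 dis34 eqU unstU.
have [S1_0|[x xS1]] := set_0Vmem S1; first by move: unstU; rewrite S1_0 set0U st2.
have compl (X Y : {set 'I_d}) : X :&: Y = set0 -> Y = (X :|: Y) :\: X.
  by move=> disXY; rewrite setDUl setDv set0U; apply/esym/setDidPl; rewrite -setI_eq0 setIC disXY.
wlog xS3 : S3 S4 st3 st4 dis34 eqU / x \in S3.
  move=> wlog_S3; have : x \in S3 :|: S4 by rewrite -eqU inE xS1.
  case/setUP => [|xS4]; first exact: wlog_S3.
  by rewrite [xs S3 * _]mulrC; apply: wlog_S3; rewrite // ?[S4 :&: _]setIC ?[S4 :|: _]setUC.
have eq13 : S1 = S3.
  apply/setP => y; have [yU|yNU] := boolP (y \in S1 :|: S2).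
    rewrite (mem_part_unstable_union st1 st2 unstU xS1 yU).
    by rewrite eqU in unstU yU; rewrite (mem_part_unstable_union st3 st4 unstU xS3 yU).
  have := yNU; rewrite eqU !inE negb_or => /andP [/negbTE -> _].
  by move: yNU; rewrite !inE negb_or => /andP [/negbTE ->].
by rewrite (compl _ _ dis12) (compl _ _ dis34) eqU eq13.
Qed.

Lemma L_G_stable_union S1 S2 : S1 :&: S2 = set0 -> stable G (S1 :|: S2) ->
  LG (xs S1 * xs S2 - x0 * xs (S1 :|: S2)).
Proof.
move=> dis12 stU; have := stable_card_le3 stU; rewrite cardsU dis12 cards0 subn0.
have [S1_le1|S1_gt1] := leqP #|S1| 1; first by move=> _; exact: L_G_disjoint_union.
have [S2_le1 _|S2_gt1] := leqP #|S2| 1; last by rewrite leqNgt (leq_add S1_gt1 S2_gt1).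
rewrite mulrC setUC; apply: L_G_disjoint_union; rewrite 1?setIC 1?setUC //.
Qed.

Lemma J_gens_L_G (p : R) : J_gens p -> LG p.
Proof.
case=> [S1 [S2 [S3 [S4 [[st1 st2 st3 st4] [dis12 dis34 eqU ->]]]]]].
have [stU|unstU] := boolP (stable G (S1 :|: S2)); last first.
  by rewrite (xset_binomial_unstable_union st1 st2 st3 st4) // subrr; apply: ideal0 L_G_ideal.
have -> : xs S1 * xs S2 - xs S3 * xs S4 =
    (xs S1 * xs S2 - x0 * xs (S1 :|: S2)) - (xs S3 * xs S4 - x0 * xs (S3 :|: S4)).
  by rewrite eqU opprB addrA subrK.
by apply: (idealB L_G_ideal); apply: L_G_stable_union; rewrite -?eqU.
Qed.

End Multipartite.

Lemma J_G_eq_L_G_iff_multipartite :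
  ideal_eq (J_G K G) LG <-> complete_multipartite_le3 G.
Proof.
split=> [|[P [partP G_pblock P_le3]] p]; first exact: J_G_eq_L_G_multipartite.
split; apply: ideal_gen_sub => q.
  by move=> Jq; apply: (J_gens_L_G partP G_pblock P_le3 Jq).
by move/L_gens_J_gens; apply: ideal_gen_mem.
Qed.

End SimpleGraph.

Unset Implicit Arguments.

Theorem proposition4p3 (K : fieldType) (d : nat) (G : rel 'I_d)
  (HG : simple_graph G) :
  [/\ [/\ (prime_ideal (I_G2 K G) <-> ideal_eq (I_G2 K G) (I_G K G)),
          (prime_ideal (J_G K G) <-> ideal_eq (J_G K G) (I_G K G))
        & (prime_ideal (L_G K G) <-> ideal_eq (L_G K G) (I_G K G))],
      (ideal_eq (I_G K G) (I_G2 K G) <-> IG_gen_by_quad_binomials K G),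
      (ideal_eq (I_G2 K G) (J_G K G) <-> ~ compl_has_triangle G)
    & (ideal_eq (J_G K G) (L_G K G) <-> complete_multipartite_le3 G)].
Proof.
split.
- exact: prime_ideals_iff_eq_I_G.
- exact: I_G_eq_I_G2_iff_quadratic.
- exact: I_G2_eq_J_G_iff_no_compl_triangle.
- exact: J_G_eq_L_G_iff_multipartite.
Qed.
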